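(* Let $x,y$ be non-commuting indeterminates and $C=xyx^{-1}y^{-1}$. Let $(R_n)_{n\in\mathbb Z}$ satisfy $$R_{2n}CR_{2n-2}=1+R_{2n-1},\qquad R_{2n+1}CR_{2n-1}=1+R_{2n}^4\qquad(n\in\mathbb Z),$$ with $R_0=yxy^{-1}$ and $R_1=y$, and set $u_n=R_{2n}$. Then for every $n\ge1$, the expansion of $u_nu_{n+1}$ as a Laurent polynomial in $x,y$ with non-negative integer coefficients contains the monomial $C^{-1}=yxy^{-1}x^{-1}$ with positive coefficient.
   Context: Work in the free skew field (non-commutative rational functions) over $\mathbb C$ generated by $x,y$. For $n\ge0$, each $u_n$ is a Laurent polynomial in $x,y$ (a $\mathbb Z$-linear combination of words in $x^{\pm1},y^{\pm1}$) with non-negative integer coefficients. *)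

(* The integral group ring Z[F_2] of the free group on x, y
   (the ring of non-commutative Laurent polynomials in x, y). *)
From mathcomp Require Import all_boot all_order all_algebra.
Set Implicit Arguments. Unset Strict Implicit. Unset Printing Implicit Defensive.
Import Order.TTheory GRing.Theory Num.Theory.
Local Open Scope ring_scope.

(* A letter: (g, e) with g = false for x, g = true for y; e = true means the
   inverse of the generator. *)
Definition letter := (bool * bool)%type.
Definition lx : letter := (false, false).
Definition ly : letter := (true, false).
Definition lxi : letter := (false, true).
Definition lyi : letter := (true, true).
Definition linv (a : letter) : letter := (a.1, ~~ a.2).

Definition word := seq letter.

(* free reduction of a word (stack-based), giving the reduced representative
   of the corresponding element of the free group F_2 *)
Definition push (a : letter) (r : word) : word :=
  match r with
  | b :: r' => if b == linv a then r' else a :: r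
  | [::] => [:: a]
  end.
Definition reduce (w : word) : word := foldr push [::] w.

(* A Laurent polynomial is represented by a formal finite sum of
   int-weighted words; its coefficient at a group element is obtained by
   collecting the terms whose words reduce to that element. *)
Definition lpoly := seq (int * word)%type.

Definition lcoef (p : lpoly) (w : word) : int :=
  \sum_(t <- p | reduce t.2 == reduce w) t.1.

(* equality in Z[F_2] *)
Definition leq_poly (p q : lpoly) : Prop := forall w, lcoef p w = lcoef q w.

Definition ladd (p q : lpoly) : lpoly := p ++ q.
Definition lmul (p q : lpoly) : lpoly :=
  [seq (a.1 * b.1, a.2 ++ b.2) | a <- p, b <- q].
Definition lmono (w : word) : lpoly := [:: (1, w)].
Definition lone : lpoly := lmono [::].
Definition lpow (p : lpoly) (n : nat) : lpoly := iter n (lmul p) lone.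

Definition Cw : word := [:: lx; ly; lxi; lyi].
Definition Cinvw : word := [:: ly; lx; lyi; lxi].

From mathcomp Require Import all_boot all_order all_algebra zify.
Set Implicit Arguments. Unset Strict Implicit. Unset Printing Implicit Defensive.
Import Order.TTheory GRing.Theory Num.Theory.
Local Open Scope ring_scope.

(* Grade the free group by the homomorphism to Z sending x to 3n + 1 and y to
   6n - 1; the commutator C has weight 0.  Say that p has leading term m of
   weight v if its coefficient at m is 1 and it vanishes at every other group
   element of weight at least v.  Leading terms multiply, and in an exact
   product r = p q they are determined for p by those of q and r.  As long as
   R (2j + 1) and R (2j + 2)^4 have positive weight, the summand 1 in the
   recurrence is invisible, and induction shows that R (2j) and R (2j + 1) have
   leading terms of weights 3 (n - j) + 1 and 6 (n - j) - 1.  At j = n the weight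
   of R (2n + 1) is -1, so 1 + R (2n + 1) has leading term 1 and u (n + 1) has
   leading term m^-1 C^-1, where m is the leading term of u n.  Hence C^-1 is the
   leading term of u n u (n + 1), with coefficient 1. *)

Fixpoint reduced (w : word) : bool :=
  if w is a :: ((b :: _) as r) then (b != linv a) && reduced r else true.

Lemma linvK : involutive linv.
Proof. by case=> g e; rewrite /linv /= negbK. Qed.

Lemma reduced_behead a r : reduced (a :: r) -> reduced r.
Proof. by case: r => //= b r /andP[]. Qed.

Lemma reduced_push a r : reduced r -> reduced (push a r).
Proof.
case: r => [|b r] //= red_br; case: ifP => [_|/negbT /= ->//].
exact: reduced_behead red_br.
Qed.

Lemma reduced_reduce w : reduced (reduce w).
Proof. by elim: w => //= a w; apply: reduced_push. Qed.

Lemma pushK a r : reduced r -> push a (push (linv a) r) = r.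
Proof.
case: r => [|b r] /=; first by rewrite eqxx.
rewrite linvK; have [->|nb] := eqVneq b a; last by rewrite /= eqxx.
by case: r => [|c r] //= /andP[/negbTE ->].
Qed.

Lemma push_linvK a r : reduced r -> push (linv a) (push a r) = r.
Proof. by rewrite -{2}(linvK a); apply: pushK. Qed.

Lemma reduce_cat u v : reduce (u ++ v) = foldr push (reduce v) u.
Proof. exact: foldr_cat. Qed.

Lemma reduced_foldr_push u r : reduced r -> reduced (foldr push r u).
Proof. by elim: u => //= a u IH /IH; apply: reduced_push. Qed.

Lemma foldr_push_reduce u r :
  reduced r -> foldr push r u = foldr push r (reduce u).
Proof.
move=> red_r; elim: u => //= a u ->.
case: (reduce u) (reduced_reduce u) => [|b s] //= red_bs.
case: ifP => [/eqP ->|_] //=.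
by rewrite pushK // reduced_foldr_push // (reduced_behead red_bs).
Qed.

Lemma reduce_reduced r : reduced r -> reduce r = r.
Proof.
elim: r => //= a r IH red_ar; rewrite IH ?(reduced_behead red_ar) //.
by case: r red_ar {IH} => [|b r] //= /andP[/negbTE ->].
Qed.

Lemma reduceK w : reduce (reduce w) = reduce w.
Proof. exact/reduce_reduced/reduced_reduce. Qed.

Lemma reduce_catl u v : reduce (u ++ v) = reduce (reduce u ++ v).
Proof. by rewrite !reduce_cat foldr_push_reduce ?reduced_reduce. Qed.

Lemma reduce_catr u v : reduce (u ++ v) = reduce (u ++ reduce v).
Proof. by rewrite !reduce_cat reduceK. Qed.

Lemma eq_reduce_catl u v w :
  reduce v = reduce w -> reduce (u ++ v) = reduce (u ++ w).
Proof. by move=> e; rewrite reduce_catr e -reduce_catr. Qed.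

Lemma eq_reduce_catr u v w :
  reduce v = reduce w -> reduce (v ++ u) = reduce (w ++ u).
Proof. by move=> e; rewrite reduce_catl e -reduce_catl. Qed.

Definition winv (w : word) : word := rev (map linv w).

Lemma winvK : involutive winv.
Proof. by move=> w; rewrite /winv map_rev revK -map_comp (eq_map linvK) map_id. Qed.

Lemma reduce_winvl u : reduce (winv u ++ u) = [::].
Proof.
elim: u => //= a u IH.
rewrite /winv /= rev_cons -cats1 -catA reduce_cat /= push_linvK ?reduced_reduce //.
by rewrite -reduce_cat.
Qed.

Lemma reduce_winvr u : reduce (u ++ winv u) = [::].
Proof. by rewrite -{1}(winvK u) reduce_winvl. Qed.

Lemma reduce_cat_eqE u v w :
  (reduce (u ++ v) == reduce w) = (reduce v == reduce (winv u ++ w)).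
Proof.
apply/eqP/eqP => e.
  by rewrite -(eq_reduce_catl (winv u) e) catA reduce_catl reduce_winvl.
by rewrite (eq_reduce_catl u e) catA reduce_catl reduce_winvr.
Qed.

Lemma reduce_cat_eqEr u v w :
  (reduce (u ++ v) == reduce w) = (reduce u == reduce (w ++ winv v)).
Proof.
apply/eqP/eqP => e.
  by rewrite -(eq_reduce_catr (winv v) e) -catA reduce_catr reduce_winvr cats0.
by rewrite (eq_reduce_catr v e) -catA reduce_catr reduce_winvl cats0.
Qed.

Definition lsupp (p : lpoly) : seq word := undup [seq reduce t.2 | t <- p].

Lemma lcoef_reduce p w w' : reduce w = reduce w' -> lcoef p w = lcoef p w'.
Proof. by move=> e; rewrite /lcoef e. Qed.

Lemma lcoef_add p q w : lcoef (ladd p q) w = lcoef p w + lcoef q w.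
Proof. exact: big_cat. Qed.

Lemma lcoef_mono m w : lcoef (lmono m) w = (reduce m == reduce w)%:R.
Proof. by rewrite /lcoef big_cons big_nil /= addr0; case: eqP. Qed.

Lemma lsupp_reduced p g : g \in lsupp p -> reduce g = g.
Proof. by rewrite mem_undup => /mapP[t _ ->]; rewrite reduceK. Qed.

Lemma lcoef_lsupp p w : lcoef p w != 0 -> reduce w \in lsupp p.
Proof.
apply: contraR => w_supp; rewrite /lcoef big1_seq // => t /andP[/eqP e tp].
by case/negP: w_supp; rewrite -e mem_undup (map_f (fun t => reduce t.2) tp).
Qed.

Lemma sum_lsupp p (F : word -> int) :
    (forall u v, reduce u = reduce v -> F u = F v) ->
  \sum_(t <- p) t.1 * F t.2 = \sum_(g <- lsupp p) lcoef p g * F g.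
Proof.
move=> F_reduce.
transitivity (\sum_(g <- lsupp p) \sum_(t <- p | g == reduce t.2) t.1 * F t.2).
  rewrite (exchange_big_dep predT) //=; apply: eq_big_seq => t tp.
  rewrite -big_filter filter_pred1_uniq ?undup_uniq ?big_seq1 //.
  by rewrite mem_undup (map_f (fun t => reduce t.2) tp).
apply: eq_big_seq => g /lsupp_reduced g_red; rewrite /lcoef big_distrl /=.
apply: eq_big => [t|t /eqP t_g]; first by rewrite g_red eq_sym.
by rewrite (F_reduce t.2 g) // g_red.
Qed.

Lemma lcoef_lmul p q w :
  lcoef (lmul p q) w = \sum_(g <- lsupp p) lcoef p g * lcoef q (winv g ++ w).
Proof.
have -> : lcoef (lmul p q) w = \sum_(t <- p) t.1 * lcoef q (winv t.2 ++ w).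
  rewrite /lcoef /lmul big_mkcond big_allpairs_dep /=.
  apply: eq_bigr => t _; rewrite big_distrr [RHS]big_mkcond /=.
  apply: eq_bigr => s _ /=; rewrite reduce_cat_eqE.
  by case: ifP; rewrite ?mulr0.
apply: sum_lsupp => u v uv; apply: lcoef_reduce.
apply/eqP; rewrite -reduce_cat_eqE -(eq_reduce_catr _ uv) catA reduce_catl.
by rewrite reduce_winvr.
Qed.

Lemma lcoef_lsupp_sum p w : \sum_(g <- lsupp p | g == reduce w) lcoef p g = lcoef p w.
Proof.
have [w_supp|w_supp] := boolP (reduce w \in lsupp p).
  rewrite -big_filter filter_pred1_uniq ?undup_uniq // big_seq1.
  exact/lcoef_reduce/reduceK.
rewrite big1_seq => [|g /andP[/eqP -> //]]; last by rewrite (negbTE w_supp).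
by apply/esym/eqP; apply: contraNT w_supp; apply: lcoef_lsupp.
Qed.

Lemma has_argmax (T : eqType) d (O : orderType d) (f : T -> O) (P : pred T) s :
  has P s -> exists2 x, P x & forall y, y \in s -> P y -> (f y <= f x)%O.
Proof.
elim: s => //= a s IH.
have [/IH[x Px x_max] _|noPs] := boolP (has P s); last first.
  rewrite orbF => Pa; exists a => // y.
  by rewrite in_cons => /orP[/eqP->//|ys Py]; case/hasP: noPs; exists y.
have [Pa|nPa] := boolP (P a); last first.
  by exists x => // y; rewrite in_cons => /orP[/eqP->|/x_max//]; rewrite (negbTE nPa).
have [le_ax|lt_xa] := leP (f a) (f x).
  by exists x => // y; rewrite in_cons => /orP[/eqP->|/x_max].
exists a => // y; rewrite in_cons => /orP[/eqP->//|ys Py].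
exact/ltW/(le_lt_trans (x_max y ys Py)).
Qed.

Section Weight.

Variables al be : int.

Definition lweight (a : letter) : int := (if a.1 then be else al) * (-1) ^+ a.2.
Definition weight (w : word) : int := \sum_(a <- w) lweight a.

Lemma weight_cat u v : weight (u ++ v) = weight u + weight v.
Proof. exact: big_cat. Qed.

Lemma lweight_linv a : lweight (linv a) = - lweight a.
Proof. by case: a => g [] /=; rewrite /lweight /= ?expr0 ?expr1 ?mulrN ?opprK. Qed.

Lemma weight_winv u : weight (winv u) = - weight u.
Proof.
rewrite /weight /winv big_rev big_map -sumrN; apply: eq_bigr => a _.
exact: lweight_linv.
Qed.

Lemma weight_reduce w : weight (reduce w) = weight w.
Proof.
rewrite /weight; elim: w => //= a w IH; rewrite big_cons -IH.
case: (reduce w) => [|b r] /=; first by rewrite !big_seq1 big_nil addr0.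
case: ifP => [/eqP->|_]; last by rewrite big_cons.
by rewrite big_cons lweight_linv addNKr.
Qed.

Lemma eq_weight u v : reduce u = reduce v -> weight u = weight v.
Proof. by move=> e; rewrite -weight_reduce e weight_reduce. Qed.

Lemma weight_Cw : weight Cw = 0.
Proof. by rewrite /weight !big_cons big_nil /lweight /=; lia. Qed.

Definition lead_term (p : lpoly) (m : word) (v : int) := [/\ lcoef p m = 1,
  weight m = v & forall w, v <= weight w -> reduce w != reduce m -> lcoef p w = 0].

Lemma lead_term_coef p m v w :
  lead_term p m v -> v <= weight w -> lcoef p w = (reduce w == reduce m)%:R.
Proof.
case=> p_m _ p_top w_ge; have [e|ne] := eqVneq (reduce w) (reduce m).
  by rewrite (lcoef_reduce _ e).
exact: p_top.
Qed.

Lemma lead_term_gt p m v w : lead_term p m v -> v < weight w -> lcoef p w = 0.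
Proof.
move=> p_lead w_gt; have [_ wm _] := p_lead; rewrite (lead_term_coef p_lead) ?ltW //.
by case: (reduce w =P reduce m) => // /eq_weight e; rewrite e wm ltxx in w_gt.
Qed.

Lemma lead_term_eq p q m v : leq_poly p q -> lead_term p m v -> lead_term q m v.
Proof. by move=> e [p_m wm p_top]; split=> [|//|w]; rewrite -e //; apply: p_top. Qed.

Lemma lead_term_mono m : lead_term (lmono m) m (weight m).
Proof. by split=> [|//|w _ /negbTE]; rewrite lcoef_mono ?eqxx // eq_sym => ->. Qed.

Lemma lead_term_lone : lead_term lone [::] 0.
Proof. by have := lead_term_mono [::]; rewrite /weight big_nil. Qed.

(* [V] bounds the weights of the monomials of [p]; it need not be attained. *)
Lemma lcoef_lmul_lead p q m v V w :
    (forall g, V < weight g -> lcoef p g = 0) -> lead_term q m v ->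
    V + v <= weight w ->
  lcoef (lmul p q) w = lcoef p (w ++ winv m).
Proof.
move=> p_le q_lead w_ge; rewrite lcoef_lmul -lcoef_lsupp_sum [RHS]big_mkcond /=.
apply: eq_big_seq => g /lsupp_reduced g_red.
have [g_gt|g_le] := ltP V (weight g); first by rewrite p_le // mul0r if_same.
rewrite (lead_term_coef q_lead); last by rewrite weight_cat weight_winv; lia.
rewrite reduce_cat_eqE winvK eq_sym reduce_cat_eqEr g_red.
by case: eqP; rewrite ?mulr1 ?mulr0.
Qed.

Lemma lead_term_mul p q m m' v v' : lead_term p m v -> lead_term q m' v' ->
  lead_term (lmul p q) (m ++ m') (v + v').
Proof.
move=> p_lead q_lead; have [p_m wm p_top] := p_lead; have [_ wm' _] := q_lead.
have pq_w w : v + v' <= weight w -> lcoef (lmul p q) w = lcoef p (w ++ winv m').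
  exact: lcoef_lmul_lead (fun g => lead_term_gt p_lead) q_lead.
have wmm' : weight (m ++ m') = v + v' by rewrite weight_cat wm wm'.
split=> // [|w w_ge ne].
  rewrite pq_w ?wmm' // -catA -p_m; apply: lcoef_reduce.
  by rewrite reduce_catr reduce_winvr cats0.
rewrite pq_w // p_top ?reduce_cat_eqEr ?winvK //.
by rewrite weight_cat weight_winv wm'; lia.
Qed.

Lemma lead_term_pow p m v k :
  lead_term p m v -> lead_term (lpow p k) (flatten (nseq k m)) (v *+ k).
Proof.
move=> p_lead; elim: k => [|k IH]; first by rewrite mulr0n; apply: lead_term_lone.
by rewrite mulrS; apply: lead_term_mul.
Qed.

Lemma lead_term_addr p q m v : lead_term p m v ->
  (forall w, v <= weight w -> lcoef q w = 0) -> lead_term (ladd p q) m v.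
Proof.
case=> p_m wm p_top q0; split=> // [|w w_ge ne]; rewrite lcoef_add q0 ?addr0 //.
  by rewrite wm.
exact: p_top.
Qed.

Lemma lead_term_addl p q m v : lead_term p m v ->
  (forall w, v <= weight w -> lcoef q w = 0) -> lead_term (ladd q p) m v.
Proof.
move=> p_lead q0; apply: lead_term_eq (lead_term_addr p_lead q0) => w.
by rewrite !lcoef_add addrC.
Qed.

Lemma lead_term_add1_gt0 p m v :
  lead_term p m v -> 0 < v -> lead_term (ladd lone p) m v.
Proof.
move=> p_lead v_gt0; apply: lead_term_addl p_lead _ => w w_ge.
apply: lead_term_gt lead_term_lone _; exact: lt_le_trans w_ge.
Qed.

Lemma lead_term_add1_lt0 p m v :
  lead_term p m v -> v < 0 -> lead_term (ladd lone p) [::] 0.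
Proof.
move=> p_lead v_lt0; apply: lead_term_addr lead_term_lone _ => w w_ge.
apply: lead_term_gt p_lead _; exact: lt_le_trans w_ge.
Qed.

Lemma exists_top_monomial p w : lcoef p w != 0 ->
  exists2 g, lcoef p g != 0 & forall w, weight g < weight w -> lcoef p w = 0.
Proof.
move=> p_w.
have [|g g_nz g_max] :=
  @has_argmax _ _ _ weight (fun g => lcoef p g != 0) (lsupp p).
  apply/hasP; exists (reduce w); first exact: lcoef_lsupp.
  by rewrite (lcoef_reduce _ (reduceK w)).
exists g => // w' w'_gt; apply/eqP; apply: contraTT w'_gt => w'_nz.
rewrite -leNgt -weight_reduce; apply: g_max; first exact: lcoef_lsupp.
by rewrite (lcoef_reduce _ (reduceK w')).
Qed.

Lemma lead_term_div p q r m t v u : lead_term q m v -> leq_poly (lmul p q) r ->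
  lead_term r t u -> lead_term p (t ++ winv m) (u - v).
Proof.
move=> q_lead pq_r r_lead; have [r_t wt r_top] := r_lead; have [_ wm _] := q_lead.
have /hasP[g0 _ /exists_top_monomial[g p_g p_top]] :
    has (fun g => lcoef p g != 0) (lsupp p).
  apply/negPn/negP => /hasPn p0; move: r_t; rewrite -pq_r lcoef_lmul big1_seq.
    by move/esym/eqP; rewrite oner_eq0.
  by move=> g /andP[_ /p0 /negPn/eqP ->]; rewrite mul0r.
have r_w w : weight g + v <= weight w -> lcoef r w = lcoef p (w ++ winv m).
  by rewrite -pq_r; apply: lcoef_lmul_lead.
have p_w w : lcoef p w = lcoef p (w ++ m ++ winv m).
  by apply: lcoef_reduce; rewrite reduce_catr reduce_winvr cats0.
have r_gm : lcoef r (g ++ m) != 0 by rewrite r_w -?catA -?p_w // weight_cat wm.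
have u_ge : weight g + v <= u.
  by rewrite -wm -weight_cat leNgt; apply: contra r_gm => /(lead_term_gt r_lead)->.
have u_le : u <= weight g + v.
  rewrite leNgt; apply: contraT => /negPn u_gt.
  by move: r_t; rewrite r_w ?p_top ?wt ?ltW // weight_cat weight_winv wt; lia.
split=> [|| w w_ge ne]; first by rewrite -r_w ?wt.
  by rewrite weight_cat weight_winv wt wm.
rewrite p_w catA -r_w ?r_top ?reduce_cat_eqEr //; rewrite weight_cat wm; lia.
Qed.

Lemma lead_term_quot p q r c m t v u : lead_term q m v ->
    leq_poly (lmul (lmul p (lmono c)) q) r -> lead_term r t u ->
  lead_term p ((t ++ winv m) ++ winv c) (u - v - weight c).
Proof.
move=> q_lead pqc_r r_lead; have pc_lead := lead_term_div q_lead pqc_r r_lead.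
exact: lead_term_div (lead_term_mono c) (fun=> erefl) pc_lead.
Qed.

End Weight.

Section Recurrence.

Variable R : nat -> lpoly.
Hypotheses (hR0 : leq_poly (R 0%N) (lmono [:: ly; lx; lyi]))
  (hR1 : leq_poly (R 1%N) (lmono [:: ly]))
  (hev : forall n : nat, (0 < n)%N ->
     leq_poly (lmul (lmul (R (2 * n)%N) (lmono Cw)) (R (2 * n - 2)%N))
              (ladd lone (R (2 * n - 1)%N)))
  (hodd : forall n : nat, (0 < n)%N ->
     leq_poly (lmul (lmul (R (2 * n + 1)%N) (lmono Cw)) (R (2 * n - 1)%N))
              (ladd lone (lpow (R (2 * n)%N) 4))).

Lemma lead_term_R_even al be j m m' a b :
    lead_term al be (R (2 * j)) m a ->
    lead_term al be (ladd lone (R (2 * j + 1))) m' b ->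
  lead_term al be (R (2 * j.+1)) ((m' ++ winv m) ++ winv Cw) (b - a).
Proof.
move=> lead_ev lead_odd; have := hev (ltn0Sn j).
have -> : (2 * j.+1 - 1 = 2 * j + 1)%N by lia.
have -> : (2 * j.+1 - 2 = 2 * j)%N by lia.
by move=> rec; have := lead_term_quot lead_ev rec lead_odd; rewrite weight_Cw subr0.
Qed.

Lemma lead_term_R_odd al be j m m' a b :
    lead_term al be (R (2 * j + 1)) m b ->
    lead_term al be (ladd lone (lpow (R (2 * j.+1)) 4)) m' a ->
  lead_term al be (R (2 * j.+1 + 1)) ((m' ++ winv m) ++ winv Cw) (a - b).
Proof.
move=> lead_odd lead_ev; have := hodd (ltn0Sn j).
have -> : (2 * j.+1 - 1 = 2 * j + 1)%N by lia.
by move=> rec; have := lead_term_quot lead_odd rec lead_ev; rewrite weight_Cw subr0.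
Qed.

Variable n : nat.

Let al : int := 3 * n%:Z + 1.
Let be : int := 6 * n%:Z - 1.

Lemma lead_terms_R j : (j <= n)%N -> exists m m',
  lead_term al be (R (2 * j)) m (3 * (n%:Z - j%:Z) + 1) /\
  lead_term al be (R (2 * j + 1)) m' (6 * (n%:Z - j%:Z) - 1).
Proof.
have weight_lead m v p :
    leq_poly p (lmono m) -> weight al be m = v -> lead_term al be p m v.
  by move=> e <-; apply: lead_term_eq (lead_term_mono _ _ _) => w; rewrite e.
elim: j => [_|j IH lt_jn].
  exists [:: ly; lx; lyi], [:: ly].
  by split; apply: weight_lead => //;
    rewrite /weight !big_cons big_nil /lweight /=; lia.
have [m [m' [lead_ev lead_odd]]] := IH (ltnW lt_jn).
have pos_odd : 0 < 6 * (n%:Z - j%:Z) - 1 by lia.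
have lead_ev' : lead_term al be (R (2 * j.+1)) ((m' ++ winv m) ++ winv Cw)
    (3 * (n%:Z - j.+1%:Z) + 1).
  move: (lead_term_R_even lead_ev (lead_term_add1_gt0 lead_odd pos_odd)).
  by congr lead_term; lia.
have pos_ev : 0 < (3 * (n%:Z - j.+1%:Z) + 1) *+ 4 by lia.
have lead_odd' :=
  lead_term_R_odd lead_odd (lead_term_add1_gt0 (lead_term_pow 4 lead_ev') pos_ev).
by do 2!eexists; split; [exact: lead_ev' | move: lead_odd'; congr lead_term; lia].
Qed.


End Recurrence.

(* The argument also covers n = 0. *)
Theorem lemma4p7 (R : nat -> lpoly)
  (hR0 : leq_poly (R 0%N) (lmono [:: ly; lx; lyi]))
  (hR1 : leq_poly (R 1%N) (lmono [:: ly]))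
  (hev : forall n : nat, (0 < n)%N ->
     leq_poly (lmul (lmul (R (2 * n)%N) (lmono Cw)) (R (2 * n - 2)%N))
              (ladd lone (R (2 * n - 1)%N)))
  (hodd : forall n : nat, (0 < n)%N ->
     leq_poly (lmul (lmul (R (2 * n + 1)%N) (lmono Cw)) (R (2 * n - 1)%N))
              (ladd lone (lpow (R (2 * n)%N) 4)))
  : forall n : nat, (1 <= n)%N ->
      0 < lcoef (lmul (R (2 * n)%N) (R (2 * (n + 1))%N)) Cinvw.
Proof.
move=> n _; have [m [m' [lead_u lead_odd]]] := lead_terms_R hR0 hR1 hev hodd (leqnn n).
have neg_odd : 6 * (n%:Z - n%:Z) - 1 < 0 by rewrite subrr.
have lead_u' := lead_term_R_even hev lead_u (lead_term_add1_lt0 lead_odd neg_odd).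
have [coef_Cinv _ _] := lead_term_mul lead_u lead_u'.
rewrite addn1 (lcoef_reduce _ (_ : _ = reduce (m ++ ([::] ++ winv m) ++ winv Cw))).
  by rewrite coef_Cinv ltr01.
by rewrite catA reduce_catl reduce_winvr.
Qed.
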